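(* Let $v=v(z)=zM(z)$, where $M(z)$ is the Motzkin generating function (so $z=\frac{v}{1+v+v^2}$). Then $$\sum_{\tau:\ \mathrm{ht}(\tau)\ge2}\mathrm{ht}(\tau)\,z^{|\tau|}=-2v+\frac{2(1-v^2)}{v}\sum_{h\ge1}\frac{v^{2h}}{1-v^{2h}},$$ where the sum on the left runs over Retakh plane trees $\tau$ of height at least $2$, $|\tau|$ is the number of nodes and $\mathrm{ht}(\tau)$ the height. Consequently, for every integer $n\ge0$, $$\sum_{\substack{\tau:\ |\tau|=n+1\\ \mathrm{ht}(\tau)\ge2}}\mathrm{ht}(\tau)=-2M_n+2\sum_{h\ge1}d(h)\left[\binom{n,3}{n+2-2h}-2\binom{n,3}{n-2h}+\binom{n,3}{n-2-2h}\right],$$ where $M_n$ is the $n$-th Motzkin number, $d(h)$ is the number of positive divisors of $h$, and $\binom{n,3}{k}=[v^k](1+v+v^2)^n$ (which is $0$ for $k<0$).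
   Context: A Retakh plane tree is a plane (ordered rooted) tree in which every non-root leaf has depth $1$ or even depth (root depth $0$); the one-node tree is included. These correspond bijectively (a tree with $n+1$ nodes to a path of semilength $n$) to Dyck paths all of whose peaks are at level $1$ or at an even level. The height of a tree is the number of edges of a longest root-to-node path. $M(z)=\sum_n M_nz^n=\frac{1-z-\sqrt{1-2z-3z^2}}{2z^2}$. *)

From HB Require Import structures.
From mathcomp Require Import all_boot all_order all_algebra.
From Stdlib Require List.
Set Implicit Arguments. Unset Strict Implicit. Unset Printing Implicit Defensive.
Import Order.TTheory GRing.Theory Num.Theory.

Inductive ptree : Type := Node of seq ptree.

Fixpoint tsize (t : ptree) : nat :=
  let: Node ts := t in (sumn (map tsize ts)).+1.

Fixpoint theight (t : ptree) : nat :=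
  let: Node ts := t in
  match ts with
  | [::] => 0
  | _ => (foldr maxn 0 (map theight ts)).+1
  end.

(* leaf_ok d t : every leaf of t, where the root of t sits at depth d,
   has depth 1 or an even depth (depth 0 = the root itself, which is even). *)
Fixpoint leaf_ok (d : nat) (t : ptree) : bool :=
  let: Node ts := t in
  match ts with
  | [::] => (d == 1) || ~~ odd d
  | _ => all (fun c => leaf_ok d.+1 c) ts
  end.

(* Retakh plane tree: every non-root leaf has depth 1 or even depth
   (the one-node tree is included). *)
Definition retakh (t : ptree) : bool := leaf_ok 0 t.

Definition enumerates (P : ptree -> Prop) (s : seq ptree) : Prop :=
  List.NoDup s /\ (forall t, List.In t s <-> P t).

Definition RT2 (m : nat) (t : ptree) : Prop :=
  retakh t /\ tsize t = m /\ 2 <= theight t.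

(* M_0 = 1, M_{n+1} = M_n + sum_{k=0}^{n-1} M_k M_{n-1-k} *)
Fixpoint motzs (n : nat) : seq nat :=
  match n with
  | 0 => [:: 1]
  | n'.+1 => let s := motzs n' in
      rcons s (nth 0 s n' + \sum_(k < n') nth 0 s k * nth 0 s (n'.-1 - k))
  end.
Definition motzkin (n : nat) : nat := nth 0 (motzs n) n.

Local Open Scope ring_scope.
Definition fps := nat -> int.
Definition fps_const (c : int) : fps := fun n => if n is 0%N then c else 0.
Definition fps_add (f g : fps) : fps := fun n => f n + g n.
Definition fps_sub (f g : fps) : fps := fun n => f n - g n.
Definition fps_scale (c : int) (f : fps) : fps := fun n => c * f n.
Definition fps_mul (f g : fps) : fps :=
  fun n => \sum_(i < n.+1) f i * g (n - i)%N.
Definition fps_pow (f : fps) (k : nat) : fps := iter k (fps_mul f) (fps_const 1).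
(* multiplicative inverse of a series with constant term 1 *)
Fixpoint fps_inv_seq (f : fps) (n : nat) : seq int :=
  match n with
  | 0 => [:: 1]
  | n'.+1 => let s := fps_inv_seq f n' in
      rcons s (- \sum_(i < n'.+1) f (n'.+1 - i)%N * nth 0 s i)
  end.
Definition fps_inv (f : fps) : fps := fun n => nth 0 (fps_inv_seq f n) n.
(* infinite sum sum_{h>=1} F h, for a family whose h-th member has
   valuation >= h (so only h <= m contribute to the coefficient of z^m) *)
Definition fps_sum1 (F : nat -> fps) : fps :=
  fun m => \sum_(1 <= h < m.+2) F h m.

Definition vser : fps := fun n => if n is n'.+1 then (motzkin n')%:Z else 0.

(* -2v + 2(1-v^2)/v * sum_{h>=1} v^{2h}/(1-v^{2h}),
   with v^{2h}/v written as v^{2h-1} *)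
Definition rhs_series : fps :=
  fps_add (fps_scale (-2) vser)
    (fps_sum1 (fun h =>
       fps_scale 2 (fps_mul (fps_sub (fps_const 1) (fps_pow vser 2))
                            (fps_mul (fps_pow vser (2 * h - 1)%N)
                                     (fps_inv (fps_sub (fps_const 1) (fps_pow vser (2 * h)%N))))))).

Definition trinom (n : nat) (k : int) : int :=
  match k with
  | Posz k' => ((1 + 'X + 'X^2 : {poly int}) ^+ n)`_k'
  | Negz _ => 0
  end.

Definition ndiv (h : nat) : nat := size (divisors h).

From Pilot Require Import Defs.
From HB Require Import structures.
From mathcomp Require Import all_boot all_order all_algebra.
From Stdlib Require List.
From mathcomp Require Import boolp.
From mathcomp Require Import ring zify.
Import Order.TTheory GRing.Theory Num.Theory.

(* Let T_h be the generating function, by number of nodes, of the Retakh trees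
   of height at most h, and v = z M(z) that of all Retakh trees.  Heights >= 2
   are even, so the heights of the trees with m nodes sum to
   2 * sum_j ([z^m] v - [z^m] T_(2j+1)).  The heart of the proof is the closed
   form  T_(2j+1) (1 - v^(2j+4)) = v (1 - v^(2j+2)),  obtained in the ring of
   formal power series by solving the recursion
   "subtree = z / (1 - forest of subtrees one level deeper)" for subtrees
   rooted at depth 0, at depth 1, at an even depth >= 2 and at an odd depth
   >= 3 (from depth 2 on only the parity of the depth matters), using
   v = z (1 + v + v^2).  It says that v - T_(2j+1) is the (j+2)-th summand
   (1 - v^2) v^(2j+3) / (1 - v^(2j+4)) of the right-hand side, which gives the
   generating-function identity.  The coefficient formula follows by expanding
   each summand as a geometric series, collecting the powers v^(2hk) by k (a
   divisor sum) and reading [z^(n+1)] v^j off the trinomial coefficients. *)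

Set Implicit Arguments.
Unset Strict Implicit.
Unset Printing Implicit Defensive.

Fixpoint ptree_code (t : ptree) : GenTree.tree unit :=
  let: Node ts := t in GenTree.Node 0 (map ptree_code ts).

Fixpoint ptree_decode (c : GenTree.tree unit) : ptree :=
  if c is GenTree.Node _ cs then Node (map ptree_decode cs) else Node [::].

Lemma ptree_codeK : cancel ptree_code ptree_decode.
Proof.
rewrite /cancel; fix IH 1 => -[ts] /=; congr Node.
by elim: ts => //= t ts IHts; rewrite IH IHts.
Qed.

HB.instance Definition _ := Countable.copy ptree (can_type ptree_codeK).

Lemma mem_cons_ind (T : eqType) (P : T -> Prop) x s c :
  c \in x :: s -> P x -> (c \in s -> P c) -> P c.
Proof. by case/predU1P => [-> //|Hs _]; apply. Qed.

Definition ptree_ind_mem (P : ptree -> Prop)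
    (H : forall ts, (forall t, t \in ts -> P t) -> P (Node ts)) : forall t, P t :=
  fix IH t := let: Node ts := t in H ts
    ((fix IHs (s : seq ptree) : forall c, c \in s -> P c :=
        match s with
        | [::] => fun c (hc : c \in [::]) => False_ind (P c) (notF hc)
        | x :: s' => fun c hc => mem_cons_ind hc (IH x) (IHs s' c)
        end) ts).

Lemma Node_inj : injective Node. Proof. by move=> a b []. Qed.

Lemma tsize_gt0 t : 0 < Defs.tsize t. Proof. by case: t. Qed.

Lemma foldr_maxn_leq (s : seq nat) h : (foldr maxn 0 s <= h) = all (leq^~ h) s.
Proof. by elim: s => //= x s IH; rewrite geq_max IH. Qed.

Lemma foldr_maxn_mem (s : seq nat) : s != [::] -> foldr maxn 0 s \in s.
Proof.
elim: s => // x s IH _ /=; case: (s =P [::]) => [-> |/eqP /IH Hs].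
  by rewrite maxn0 mem_head.
by case: (leqP (foldr maxn 0 s) x) => _; rewrite ?mem_head // inE Hs orbT.
Qed.

Lemma theight_leq0 ts : (theight (Node ts) <= 0) = (ts == [::]).
Proof. by case: ts. Qed.

Lemma theight_leqS ts h :
  (theight (Node ts) <= h.+1) = all (fun c => theight c <= h) ts.
Proof. by case: ts => //= c ts; rewrite ltnS geq_max foldr_maxn_leq all_map. Qed.

Lemma tsize_child x ts : x \in ts -> Defs.tsize x <= sumn (map Defs.tsize ts).
Proof. by elim: ts => //= y ts IH; rewrite inE => /predU1P [->|/IH]; lia. Qed.

Lemma theight_lt_tsize t : theight t < Defs.tsize t.
Proof.
elim/ptree_ind_mem: t => ts IH; case: ts IH => [//|c ts] IH.
change (theight (Node (c :: ts)) < (sumn (map Defs.tsize (c :: ts))).+1).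
have [N EN] : exists N, sumn (map Defs.tsize (c :: ts)) = N.+1.
  by exists (sumn (map Defs.tsize (c :: ts))).-1; rewrite prednK //= addn_gt0 tsize_gt0.
rewrite EN ltnS theight_leqS; apply/allP => x Hx.
by have := IH x Hx; have := tsize_child Hx; rewrite EN; lia.
Qed.

Definition depth_ok (d : nat) : bool := (d == 1) || ~~ odd d.

Lemma leaf_ok_node d ts :
  leaf_ok d (Node ts) = if ts is [::] then depth_ok d else all (leaf_ok d.+1) ts.
Proof. by case: ts. Qed.

Lemma depth_ok_shift2 d : 2 <= d -> depth_ok d.+2 = depth_ok d.
Proof. by case: d => [|[|d]] // _; rewrite /depth_ok /= negbK. Qed.

(* A deepest leaf of a tree rooted at depth d sits at depth d + height. *)
Lemma leaf_ok_height t d : leaf_ok d t -> depth_ok (d + theight t).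
Proof.
elim/ptree_ind_mem: t d => ts IH d; rewrite leaf_ok_node.
case: ts IH => [|c ts] IH; first by rewrite addn0.
move=> /allP Hall.
have /mapP [x Hx Ex] := foldr_maxn_mem (isT : map theight (c :: ts) != [::]).
have -> : theight (Node (c :: ts)) = (theight x).+1 by rewrite -Ex.
by rewrite addnS -addSn; apply: IH x Hx d.+1 (Hall x Hx).
Qed.

Lemma retakh_height_even t : retakh t -> 2 <= theight t -> ~~ odd (theight t).
Proof.
move=> /leaf_ok_height; rewrite /depth_ok add0n.
by case/orP => // /eqP ->.
Qed.

(* forests T fuel n lists the sequences of trees of total size n in which
   every tree of size k is drawn from T k (the fuel bounds the recursion and
   is irrelevant as soon as n <= fuel). *)
Fixpoint forests (T : nat -> seq ptree) (fuel n : nat) : seq (seq ptree) :=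
  if n is 0 then [:: [::]] else
  if fuel is fuel'.+1 then
    flatten [seq [seq t :: f | t <- T k, f <- forests T fuel' (n - k)] | k <- iota 1 n]
  else [::].

Lemma forests0 T fuel : forests T fuel 0 = [:: [::]].
Proof. by case: fuel. Qed.

Lemma forestsS T fuel n : forests T fuel.+1 n.+1 =
  flatten [seq [seq t :: f | t <- T k, f <- forests T fuel (n.+1 - k)] | k <- iota 1 n.+1].
Proof. by []. Qed.

Lemma forests_fuel T n f1 f2 : n <= f1 -> n <= f2 -> forests T f1 n = forests T f2 n.
Proof.
elim: f1 n f2 => [|f1 IH] [|n] [|f2] H1 H2; rewrite ?forests0 //; try lia.
rewrite !forestsS; congr flatten; apply/eq_in_map => k; rewrite mem_iota => /andP [Hk1 Hk2].
by congr allpairs; apply: IH; lia.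
Qed.

Lemma uniq_flatten_blocks (I A : eqType) (B : I -> seq A) (s : seq I) :
  uniq s -> {in s, forall k, uniq (B k)} ->
  (forall k1 k2 x, x \in B k1 -> x \in B k2 -> k1 = k2) ->
  uniq (flatten [seq B k | k <- s]).
Proof.
move=> Us UB Dis; elim: s Us UB => //= k s IH /andP [Hk Us] UB.
rewrite cat_uniq UB ?mem_head // IH // => [|k' Hk']; last by apply: UB; rewrite inE Hk' orbT.
rewrite andbT; apply/hasPn => x /flattenP [b /mapP [k' Hk' ->]] Hx.
by apply/negP => /(Dis _ _ _ Hx) Ek; move: Hk; rewrite -Ek Hk'.
Qed.

Section Forests.
Variable T : nat -> seq ptree.
Hypothesis T_tsize : forall k t, t \in T k -> Defs.tsize t = k.

Lemma mem_forests_nil fuel f :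
  (f \in forests T fuel 0) =
  all (fun t => t \in T (Defs.tsize t)) f && (sumn (map Defs.tsize f) == 0).
Proof.
rewrite forests0 inE; case: f => //= t f.
by rewrite addn_eq0 (negbTE (lt0n_neq0 (tsize_gt0 t))) andbF.
Qed.

Lemma mem_forests fuel n f : n <= fuel ->
  (f \in forests T fuel n) =
  all (fun t => t \in T (Defs.tsize t)) f && (sumn (map Defs.tsize f) == n).
Proof.
elim: fuel n f => [|fuel IH] [|n] f Hn; rewrite ?mem_forests_nil //.
rewrite forestsS; apply/idP/idP.
  case/flattenP=> b /mapP [k]; rewrite mem_iota => /andP [Hk1 Hk2] ->.
  case/allpairsP=> -[t f'] [/= Ht Hf' ->]; rewrite IH in Hf'; last lia.
  case/andP: Hf' => Hall /eqP Hs; rewrite /= (T_tsize Ht) Ht Hall /= Hs; apply/eqP; lia.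
case: f => [//|t f]; rewrite [all _ _]/= [sumn _]/= -andbA => /and3P [Ht Hall /eqP Hs].
apply/flattenP.
exists [seq t0 :: f0 | t0 <- T (Defs.tsize t), f0 <- forests T fuel (n.+1 - Defs.tsize t)].
  by apply/mapP; exists (Defs.tsize t); rewrite // mem_iota tsize_gt0 /=; lia.
apply/allpairsP; exists (t, f); split => //=.
rewrite IH; last by have := tsize_gt0 t; lia.
by rewrite Hall; apply/eqP; lia.
Qed.

Hypothesis T_uniq : forall k, uniq (T k).

Lemma uniq_forests fuel n : n <= fuel -> uniq (forests T fuel n).
Proof.
elim: fuel n => [|fuel IH] [|n] Hn; rewrite ?forests0 //.
rewrite forestsS; apply: uniq_flatten_blocks; first exact: iota_uniq.
  move=> k; rewrite mem_iota => /andP [Hk1 Hk2].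
  apply: allpairs_uniq => //; first by apply: IH; lia.
  by move=> [a b] [c d] _ _ /= [-> ->].
move=> k1 k2 x /allpairsP [[t f] [/= Ht _ ->]] /allpairsP [[t' f'] [/= Ht' _ [E _]]].
by rewrite -(T_tsize Ht) -(T_tsize Ht') E.
Qed.

Lemma size_forestsS n :
  size (forests T n.+1 n.+1) =
  \sum_(k < n.+1) size (T k.+1) * size (forests T (n - k) (n - k)).
Proof.
rewrite forestsS size_flatten /shape -map_comp sumnE big_map.
rewrite -[iota 1 n.+1]/(index_iota 1 n.+2) big_add1 /= big_mkord.
apply: eq_bigr => k _ /=; rewrite size_allpairs subSS.
by congr (_ * size _); apply: forests_fuel; lia.
Qed.
End Forests.

Fixpoint bounded_trees (h d n : nat) : seq ptree :=
  match h with
  | 0 => if (n == 1) && depth_ok d then [:: Node [::]] else [::]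
  | h'.+1 => if n is n'.+1 then
      [seq Node f | f <- forests (bounded_trees h' d.+1) n' n' & (f != [::]) || depth_ok d]
      else [::]
  end.

Lemma bounded_trees0 h d : bounded_trees h d 0 = [::].
Proof. by case: h. Qed.

Lemma mem_bounded_trees h d n t :
  (t \in bounded_trees h d n) =
  [&& leaf_ok d t, theight t <= h & Defs.tsize t == n].
Proof.
elim: h d n t => [|h IH] d n [ts].
  rewrite /= theight_leq0; case: ts => [|c ts] /=; last first.
    by rewrite andbF; case: ifP => _; rewrite ?inE //; apply/negbTE/eqP => -[].
  rewrite -/(depth_ok d); case: (depth_ok d); rewrite ?andbT ?andbF //=.
  case: (n =P 1) => [->|/eqP Hn]; first by rewrite inE eqxx.
  by rewrite in_nil eq_sym (negbTE Hn).
case: n => [|n]; first by rewrite /= !andbF.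
have T_tsize k t : t \in bounded_trees h d.+1 k -> Defs.tsize t = k.
  by rewrite IH => /and3P [_ _ /eqP].
rewrite [bounded_trees _ _ _]/= (mem_map Node_inj) mem_filter mem_forests //.
rewrite eqSS theight_leqS leaf_ok_node.
have -> : all (fun t => t \in bounded_trees h d.+1 (Defs.tsize t)) ts =
          all (leaf_ok d.+1) ts && all (fun c => theight c <= h) ts.
  by rewrite -all_predI; apply: eq_all => c /=; rewrite IH eqxx andbT.
by case: ts => [|c ts] //=; rewrite !andbA.
Qed.

Lemma bounded_trees_tsize h d n t : t \in bounded_trees h d n -> Defs.tsize t = n.
Proof. by rewrite mem_bounded_trees => /and3P [_ _ /eqP]. Qed.

Lemma uniq_bounded_trees h d n : uniq (bounded_trees h d n).
Proof.
elim: h d n => [|h IH] d [|n] //=; first by case: ifP.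
rewrite map_inj_uniq; last exact: Node_inj.
rewrite filter_uniq // uniq_forests //.
exact: bounded_trees_tsize.
Qed.

Lemma bounded_trees_shift2 h d : 2 <= d -> bounded_trees h d.+2 = bounded_trees h d.
Proof.
elim: h d => [|h IH] d Hd; apply: funext => -[|n] /=; rewrite ?depth_ok_shift2 //.
by rewrite IH //; lia.
Qed.

Local Open Scope ring_scope.

Lemma fps_ext (f g : fps) : (forall n, f n = g n) -> f = g.
Proof. exact: funext. Qed.

Definition fps_zero : fps := fun _ => 0.
Definition fps_opp (f : fps) : fps := fun n => - f n.

Fact fps_addA : associative fps_add.
Proof. by move=> f g h; apply: fps_ext => n; rewrite /fps_add addrA. Qed.
Fact fps_addC : commutative fps_add.
Proof. by move=> f g; apply: fps_ext => n; rewrite /fps_add addrC. Qed.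
Fact fps_add0 : left_id fps_zero fps_add.
Proof. by move=> f; apply: fps_ext => n; rewrite /fps_add add0r. Qed.
Fact fps_addN : left_inverse fps_zero fps_opp fps_add.
Proof. by move=> f; apply: fps_ext => n; rewrite /fps_add addNr. Qed.

HB.instance Definition _ := Choice.on fps.
HB.instance Definition _ := GRing.isZmodule.Build fps fps_addA fps_addC fps_add0 fps_addN.

Lemma fps_mul_rev (f g : fps) n :
  fps_mul f g n = \sum_(j < n.+1) f (n - j)%N * g j.
Proof.
rewrite /fps_mul (reindex_inj rev_ord_inj) /=.
by apply: eq_bigr => j _; rewrite subKn // -ltnS.
Qed.

Fact fps_mulA : associative fps_mul.
Proof.
move=> p q r; apply: fps_ext => i; rewrite {1}/fps_mul fps_mul_rev.
pose c j k := p j * (q (i - j - k)%N * r k).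
transitivity (\sum_(j < i.+1) \sum_(k < i.+1 | (k <= i - j)%N) c j k).
  apply: eq_bigr => /= j _; rewrite fps_mul_rev big_distrr /=.
  by rewrite (big_ord_narrow_leq (leq_subr _ _)).
rewrite (exchange_big_dep predT) //=; apply: eq_bigr => k _.
transitivity (\sum_(j < i.+1 | (j <= i - k)%N) c j k).
  apply: eq_bigl => j; rewrite -ltnS -(ltnS j) -!subSn ?leq_ord //.
  by rewrite -subn_gt0 -(subn_gt0 j) -!subnDA addnC.
rewrite (big_ord_narrow_leq (leq_subr _ _)) /fps_mul big_distrl /=.
by apply: eq_bigr => j _; rewrite /c -!subnDA addnC mulrA.
Qed.

Fact fps_mulC : commutative fps_mul.
Proof.
move=> f g; apply: fps_ext => i; rewrite fps_mul_rev /fps_mul.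
by apply: eq_bigr => j _; rewrite mulrC.
Qed.

Fact fps_mul1 : left_id (fps_const 1) fps_mul.
Proof.
move=> f; apply: fps_ext => i; rewrite /fps_mul big_ord_recl /= mul1r subn0.
by rewrite big1 ?addr0 // => j _; rewrite mul0r.
Qed.

Fact fps_mulDl : left_distributive fps_mul fps_add.
Proof.
move=> f g h; apply: fps_ext => i; rewrite /fps_mul /fps_add -big_split /=.
by apply: eq_bigr => j _; rewrite mulrDl.
Qed.

Fact fps_one_neq0 : fps_const 1 != fps_zero.
Proof. by apply/eqP => /(congr1 (fun f : fps => f 0%N)). Qed.

HB.instance Definition _ :=
  GRing.Zmodule_isComNzRing.Build fps fps_mulA fps_mulC fps_mul1 fps_mulDl fps_one_neq0.

Lemma fpsD (f g : fps) n : (f + g) n = f n + g n. Proof. by []. Qed.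
Lemma fpsN (f : fps) n : (- f) n = - f n. Proof. by []. Qed.
Lemma fpsB (f g : fps) n : (f - g) n = f n - g n. Proof. by []. Qed.
Lemma fpsM (f g : fps) n : (f * g) n = \sum_(i < n.+1) f i * g (n - i)%N.
Proof. by []. Qed.
Lemma fps1 n : (1 : fps) n = if n is 0%N then 1 else 0. Proof. by []. Qed.
Lemma fps_powE (f : fps) k : fps_pow f k = f ^+ k.
Proof. by elim: k => //= k ->; rewrite exprS. Qed.

Lemma fps_sum (I : Type) (r : seq I) (P : pred I) (F : I -> fps) n :
  (\sum_(i <- r | P i) F i) n = \sum_(i <- r | P i) F i n.
Proof. exact: (big_morph (fun f : fps => f n) (fun f g => fpsD f g n)). Qed.

Lemma size_fps_inv_seq f n : size (fps_inv_seq f n) = n.+1.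
Proof. by elim: n => //= n IH; rewrite size_rcons IH. Qed.

Lemma nth_fps_inv_seq f n k : (k <= n)%N -> nth 0 (fps_inv_seq f n) k = fps_inv f k.
Proof.
elim: n => [|n IH] Hk; first by move: Hk; rewrite leqn0 => /eqP ->.
rewrite /= nth_rcons size_fps_inv_seq; case: ltnP => Hk2; first exact: IH.
have -> : k = n.+1 by apply/eqP; rewrite eqn_leq Hk Hk2.
by rewrite eqxx /fps_inv /= nth_rcons size_fps_inv_seq ltnn eqxx.
Qed.

Lemma fps_invS f n :
  fps_inv f n.+1 = - \sum_(i < n.+1) f (n.+1 - i)%N * fps_inv f i.
Proof.
rewrite {1}/fps_inv /= nth_rcons size_fps_inv_seq ltnn eqxx; congr (- _).
by apply: eq_bigr => i _; rewrite nth_fps_inv_seq // -ltnS.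
Qed.

Lemma mulr_fps_inv (f : fps) : f 0%N = 1 -> f * fps_inv f = 1.
Proof.
move=> f0; apply: fps_ext => -[|n]; rewrite [LHS]fps_mul_rev.
  by rewrite big_ord1 f0 mul1r /fps_inv.
by rewrite big_ord_recr /= subnn f0 mul1r fps_invS addrC addNr.
Qed.

Definition vanishes_below (f : fps) (k : nat) : Prop := forall i, (i < k)%N -> f i = 0.

Lemma vanishes_belowM f g a b :
  vanishes_below f a -> vanishes_below g b -> vanishes_below (f * g) (a + b).
Proof.
move=> Hf Hg i Hi; rewrite fpsM big1 // => j _.
case: (ltnP j a) => Hj; first by rewrite Hf // mul0r.
by rewrite Hg ?mulr0 //; have := ltn_ord j; lia.
Qed.

Lemma vanishes_belowMl f g a : vanishes_below f a -> vanishes_below (f * g) a.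
Proof. by move=> Hf; rewrite -[a]addn0; apply: vanishes_belowM. Qed.

Lemma vanishes_belowMr f g a : vanishes_below g a -> vanishes_below (f * g) a.
Proof. by rewrite mulrC; apply: vanishes_belowMl. Qed.

Lemma vanishes_belowX f a k : vanishes_below f a -> vanishes_below (f ^+ k) (a * k).
Proof.
move=> Hf; elim: k => [|k IH]; first by move=> i; rewrite muln0.
by rewrite exprS mulnS; apply: vanishes_belowM.
Qed.

Definition zvar : fps := fun n => if n == 1%N then 1 else 0.

Lemma zvarM_S (f : fps) n : (zvar * f) n.+1 = f n.
Proof.
rewrite fpsM big_ord_recl big_ord_recl big1 /= ?addr0; last by move=> i _; rewrite mul0r.
by rewrite /zvar /= mul0r add0r mul1r /bump /= subSS subn0.
Qed.

Lemma zvarM_0 (f : fps) : (zvar * f) 0%N = 0.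
Proof. by rewrite fpsM big_ord1 mul0r. Qed.

Lemma size_motzs n : size (motzs n) = n.+1.
Proof. by elim: n => //= n IH; rewrite size_rcons IH. Qed.

Lemma nth_motzs n k : (k <= n)%N -> nth 0%N (motzs n) k = motzkin k.
Proof.
elim: n => [|n IH] Hk; first by move: Hk; rewrite leqn0 => /eqP ->.
rewrite /= nth_rcons size_motzs; case: ltnP => Hk2; first exact: IH.
have -> : k = n.+1 by apply/eqP; rewrite eqn_leq Hk Hk2.
by rewrite eqxx /motzkin /= nth_rcons size_motzs ltnn eqxx.
Qed.

Lemma motzkinS n :
  motzkin n.+1 = (motzkin n + \sum_(k < n) motzkin k * motzkin (n.-1 - k))%N.
Proof.
rewrite {1}/motzkin /= nth_rcons size_motzs ltnn eqxx nth_motzs //.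
congr (_ + _)%N; apply: eq_bigr => k _.
by rewrite nth_motzs ?(ltnW (ltn_ord k)) // nth_motzs //; lia.
Qed.

Local Notation v := vser.

Definition phi : fps := 1 + v + v ^+ 2.

Lemma v_eq : v = zvar * phi.
Proof.
apply: fps_ext => -[|n]; first by rewrite zvarM_0.
rewrite zvarM_S /phi !fpsD fps1 expr2; case: n => [|n].
  by rewrite fpsM big_ord1 mul0r !addr0.
rewrite add0r /vser motzkinS PoszD; congr (_ + _).
rewrite fpsM big_ord_recl big_ord_recr /= subnn mul0r mulr0 add0r addr0.
rewrite (big_morph Posz PoszD (erefl _)); apply: eq_bigr => i _.
have -> : (n.+1 - bump 0 i = (n.-1 - i).+1)%N by rewrite /bump /=; have := ltn_ord i; lia.
by rewrite add0n PoszM.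
Qed.

(* v has valuation 1, so v^k has valuation k. *)
Lemma vanishes_below_vX k : vanishes_below (v ^+ k) k.
Proof.
have v0 : vanishes_below v 1 by move=> [].
by have := vanishes_belowX (k := k) v0; rewrite mul1n.
Qed.

Lemma one_sub_vX_0 k : (0 < k)%N -> (1 - v ^+ k) 0%N = 1.
Proof. by move=> Hk; rewrite fpsB fps1 vanishes_below_vX // subr0. Qed.

(* The generating functions of height-bounded subtrees are ratios
   Nq q / Dq q in v for q a power of v; the four lemmas below show that one
   step of the recursion "subtree = z / (1 - forest of deeper subtrees)"
   preserves these closed forms.  Each proof writes the difference of the two
   sides as a combination of the hypotheses and of the Motzkin equation. *)
Definition Dq (q : fps) : fps := (1 + v) * (1 - v * q).
Definition Nq (q : fps) : fps := v * (1 - q).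

Lemma zphi_sub_v : zvar * phi - v = 0.
Proof. by rewrite -v_eq subrr. Qed.

Lemma closed_step_odd Ea Ob q : Ea * Dq q = Nq q -> Ob * (1 - Ea) = zvar * Ea ->
  Ob * (1 - v ^+ 2 * q) = zvar * Nq q.
Proof.
move=> H1 H2; apply/eqP; rewrite -subr_eq0.
have -> : Ob * (1 - v ^+ 2 * q) - zvar * Nq q =
  Dq q * (Ob * (1 - Ea) - zvar * Ea) + (Ob + zvar) * (Ea * Dq q - Nq q)
  by rewrite /Dq /Nq; ring.
by rewrite H1 H2 !subrr !mulr0 addr0.
Qed.

Lemma closed_step_even Ob Ec q : Ob * (1 - v ^+ 2 * q) = zvar * Nq q ->
  Ec * (1 - Ob) = zvar -> Ec * Dq (v ^+ 2 * q) = Nq (v ^+ 2 * q).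
Proof.
move=> H1 H2; apply/eqP; rewrite -subr_eq0.
have -> : Ec * Dq (v ^+ 2 * q) - Nq (v ^+ 2 * q) =
  phi * (1 - v ^+ 2 * q) * (Ec * (1 - Ob) - zvar)
  + (Ec * v * (1 - q) + (1 - v ^+ 2 * q)) * (zvar * phi - v)
  + Ec * phi * (Ob * (1 - v ^+ 2 * q) - zvar * Nq q)
  by rewrite /Dq /Nq /phi; ring.
by rewrite H1 H2 zphi_sub_v !subrr !mulr0 !addr0.
Qed.

Lemma closed_step_depth1 Ea G1 q : Ea * Dq q = Nq q -> G1 * (1 - Ea) = zvar ->
  G1 * (1 - v ^+ 2 * q) = zvar * Dq q.
Proof.
move=> H1 H2; apply/eqP; rewrite -subr_eq0.
have -> : G1 * (1 - v ^+ 2 * q) - zvar * Dq q =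
  Dq q * (G1 * (1 - Ea) - zvar) + G1 * (Ea * Dq q - Nq q)
  by rewrite /Dq /Nq; ring.
by rewrite H1 H2 !subrr !mulr0 addr0.
Qed.

Lemma closed_step_root G1 G0 q : G1 * (1 - v ^+ 2 * q) = zvar * Dq q ->
  G0 * (1 - G1) = zvar -> G0 * (1 - v ^+ 4 * q) = v * (1 - v ^+ 2 * q).
Proof.
move=> H1 H2; apply/eqP; rewrite -subr_eq0.
have -> : G0 * (1 - v ^+ 4 * q) - v * (1 - v ^+ 2 * q) =
  phi * (1 - v ^+ 2 * q) * (G0 * (1 - G1) - zvar)
  + (G0 * Dq q + (1 - v ^+ 2 * q)) * (zvar * phi - v)
  + G0 * phi * (G1 * (1 - v ^+ 2 * q) - zvar * Dq q)
  by rewrite /Dq /Nq /phi; ring.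
by rewrite H1 H2 zphi_sub_v !subrr !mulr0 !addr0.
Qed.

(* Series E h, O h, G1 h, G0 h obeying the recursions of height-bounded
   subtrees rooted at an even depth >= 2, an odd depth >= 3, depth 1 and
   depth 0 respectively. *)
Section ClosedForms.
Variables E O G1 G0 : nat -> fps.
Hypothesis E0 : E 0%N = zvar.
Hypothesis O0 : O 0%N = 0.
Hypothesis ES : forall h, E h.+1 * (1 - O h) = zvar.
Hypothesis OS : forall h, O h.+1 * (1 - E h) = zvar * E h.
Hypothesis G10 : G1 0%N = zvar.
Hypothesis G1S : forall h, G1 h.+1 * (1 - E h) = zvar.
Hypothesis G0S : forall h, G0 h.+1 * (1 - G1 h) = zvar.

Lemma even_closed k :
  E k.*2 * Dq (v ^+ k.*2.+2) = Nq (v ^+ k.*2.+2) /\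
  E k.*2.+1 * Dq (v ^+ k.*2.+2) = Nq (v ^+ k.*2.+2).
Proof.
have base : zvar * Dq (v ^+ 2) = Nq (v ^+ 2).
  apply/eqP; rewrite -subr_eq0 -(mulr0 (1 - v ^+ 2)) -zphi_sub_v.
  by apply/eqP; rewrite /Dq /Nq /phi; ring.
elim: k => [|k [IH1 IH2]].
  by rewrite E0; split => //; have := ES 0; rewrite O0 subr0 mulr1 => ->.
have -> : v ^+ (k.+1).*2.+2 = v ^+ 2 * v ^+ k.*2.+2 by rewrite -exprD.
by split; apply: closed_step_even _ (ES _); apply: closed_step_odd _ (OS _).
Qed.

Lemma root_closed j : G0 j.*2.+1 * (1 - v ^+ j.*2.+4) = v * (1 - v ^+ j.*2.+2).
Proof.
case: j => [|k].
  have H1 : G1 0%N * (1 - v ^+ 2 * 1) = zvar * Dq 1 by rewrite G10 /Dq; ring.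
  by have := closed_step_root H1 (G0S 0); rewrite !mulr1.
have := closed_step_root (closed_step_depth1 (proj2 (even_closed k)) (G1S _)) (G0S _).
by rewrite -!exprD.
Qed.
End ClosedForms.

Definition tree_gf (h d : nat) : fps := fun n => (size (bounded_trees h d n))%:Z.
Definition forest_gf (h d : nat) : fps :=
  fun n => (size (forests (bounded_trees h d) n n))%:Z.

(* A forest is empty or a tree followed by a forest: F = 1 + T F. *)
Lemma forest_gf_eq h d : forest_gf h d * (1 - tree_gf h d) = 1.
Proof.
suff E : forest_gf h d = 1 + tree_gf h d * forest_gf h d.
  by rewrite mulrBr mulr1 {1}E [forest_gf h d * _]mulrC addrK.
apply: fps_ext => -[|n]; rewrite fpsD fpsM fps1.
  by rewrite big_ord1 /tree_gf bounded_trees0 mul0r addr0.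
rewrite add0r big_ord_recl /tree_gf bounded_trees0 mul0r add0r /forest_gf.
rewrite size_forestsS (big_morph Posz PoszD (erefl _)).
by apply: eq_bigr => k _; rewrite PoszM /bump /= subSS.
Qed.

Lemma tree_gf0 d : tree_gf 0 d = if depth_ok d then zvar else 0.
Proof.
apply: fps_ext => n; rewrite /tree_gf /=.
by case: (depth_ok d); rewrite ?andbT ?andbF /zvar //; case: (n == 1%N).
Qed.

(* A tree is a root above a forest; the forest must be nonempty when the root
   is not an admissible leaf. *)
Lemma tree_gfS_ok h d : depth_ok d -> tree_gf h.+1 d = zvar * forest_gf h d.+1.
Proof.
move=> Hd; apply: fps_ext => -[|n]; first by rewrite zvarM_0.
rewrite zvarM_S /tree_gf /forest_gf /= size_map.
by congr (Posz (size _)); apply/all_filterP/allP => f _; rewrite Hd orbT.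
Qed.

Lemma tree_gfS_nok h d : ~~ depth_ok d -> tree_gf h.+1 d = zvar * (forest_gf h d.+1 - 1).
Proof.
move=> Hd; apply: fps_ext => -[|n]; first by rewrite zvarM_0.
rewrite zvarM_S /tree_gf /forest_gf fpsB fps1 /= size_map (negbTE Hd).
case: n => [//|n]; rewrite subr0; congr (Posz (size _)).
apply/all_filterP/allP => f; rewrite (@mem_forests _ (@bounded_trees_tsize h d.+1)) //.
by case: f.
Qed.

Lemma tree_gf_step_ok h d : depth_ok d -> tree_gf h.+1 d * (1 - tree_gf h d.+1) = zvar.
Proof. by move=> Hd; rewrite tree_gfS_ok // -mulrA forest_gf_eq mulr1. Qed.

Lemma root_tree_gf j :
  tree_gf j.*2.+1 0 * (1 - v ^+ j.*2.+4) = v * (1 - v ^+ j.*2.+2).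
Proof.
have shift h : tree_gf h 4 = tree_gf h 2.
  by apply: fps_ext => n; rewrite /tree_gf bounded_trees_shift2.
apply: (@root_closed (tree_gf^~ 2) (tree_gf^~ 3) (tree_gf^~ 1) (tree_gf^~ 0)).
- by rewrite tree_gf0.
- by rewrite tree_gf0.
- by move=> h; apply: tree_gf_step_ok.
- move=> h; rewrite tree_gfS_nok // -shift -mulrA mulrBl forest_gf_eq mul1r.
  by rewrite opprB addrC subrK.
- by rewrite tree_gf0.
- by move=> h; apply: tree_gf_step_ok.
- by move=> h; apply: tree_gf_step_ok.
Qed.

Lemma InP (T : eqType) (x : T) s : reflect (List.In x s) (x \in s).
Proof.
elim: s => [|y s IH] /=; first by right.
rewrite inE; apply: (iffP predU1P) => [[->|/IH]|[->|/IH]]; by [left | right].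
Qed.

Lemma NoDupP (T : eqType) (s : seq T) : reflect (List.NoDup s) (uniq s).
Proof.
elim: s => [|x s IH] /=; first by left; constructor.
apply: (iffP andP) => [[/InP Hx /IH Hs]|Hnd]; first by constructor.
by inversion Hnd; split; [apply/InP | apply/IH].
Qed.

Lemma enumerates_perm (P : ptree -> Prop) s1 s2 :
  enumerates P s1 -> enumerates P s2 -> perm_eq s1 s2.
Proof.
move=> [/NoDupP U1 H1] [/NoDupP U2 H2]; apply: uniq_perm => // t.
by apply/InP/InP => [/H1 /H2 | /H2 /H1].
Qed.

(* All Retakh trees with m nodes (their height is below m). *)
Definition retakh_trees (m : nat) : seq ptree := bounded_trees m.*2.+1 0 m.

Lemma mem_retakh_trees m t :
  (t \in retakh_trees m) = retakh t && (Defs.tsize t == m).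
Proof.
rewrite mem_bounded_trees /retakh; case: (Defs.tsize t =P m) => [E|]; rewrite ?andbF //.
have -> : (theight t <= m.*2.+1)%N by have := theight_lt_tsize t; rewrite E; lia.
by rewrite !andbT.
Qed.

Lemma RT2_enum m : enumerates (RT2 m) [seq t <- retakh_trees m | (2 <= theight t)%N].
Proof.
split; first by apply/NoDupP; rewrite filter_uniq // uniq_bounded_trees.
move=> t; apply: (iff_trans (rwP (InP _ _))).
rewrite mem_filter mem_retakh_trees /RT2.
by split => [/and3P [H2 Hr /eqP Hs] | [Hr [Hs H2]]]; last rewrite H2 Hr Hs eqxx.
Qed.

Lemma sum_ltn_minn m x : (\sum_(j < m) (j < x : nat) = minn m x)%N.
Proof.
elim: m => [|m IH]; first by rewrite big_ord0 min0n.
by rewrite big_ord_recr /= IH; case: (ltnP m x) => H; lia.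
Qed.

(* Since heights >= 2 are even, [ht >= 2] ht = 2 #{j < m | 2j+1 < ht}. *)
Lemma height_as_sum m t : t \in retakh_trees m ->
  ((2 <= theight t) * theight t = 2 * \sum_(j < m) (j.*2.+1 < theight t : nat))%N.
Proof.
rewrite mem_retakh_trees => /andP [Hr /eqP Hs].
have Hlt := theight_lt_tsize t; rewrite Hs in Hlt.
case: (leqP 2 (theight t)) => H2 /=; last first.
  by rewrite mul0n big1 // => j _; apply/eqP; rewrite eqb0 -leqNgt; lia.
have E : theight t = (theight t)./2.*2.
  by rewrite -{1}(odd_double_half (theight t)) (negbTE (retakh_height_even Hr H2)).
rewrite mul1n E; set x := (theight t)./2.
have double_ltn j : (j.*2.+1 < x.*2)%N = (j < x)%N by apply/idP/idP; lia.
under eq_bigr => j _ do rewrite double_ltn.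
by rewrite sum_ltn_minn; move: Hlt; rewrite E; lia.
Qed.

Lemma count_height_leq m j :
  count (fun t => theight t <= j)%N (retakh_trees m) = size (bounded_trees j 0 m).
Proof.
rewrite -size_filter; apply: perm_size; apply: uniq_perm.
- by rewrite filter_uniq // uniq_bounded_trees.
- exact: uniq_bounded_trees.
move=> t; rewrite mem_filter mem_retakh_trees mem_bounded_trees /retakh.
by case: (theight t <= j)%N; rewrite ?andbF ?andbT.
Qed.

(* Summing heights layer by layer: each layer j < m counts the trees of
   height > 2j+1, twice. *)
Lemma height_sum_nat m s : enumerates (RT2 m) s ->
  (\sum_(t <- s) theight t =
   2 * \sum_(j < m) (size (retakh_trees m) - size (bounded_trees j.*2.+1 0 m)))%N.
Proof.
move=> Hs; rewrite (perm_big _ (enumerates_perm Hs (RT2_enum m))) big_filter big_mkcond.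
rewrite (eq_big_seq (fun t => 2 * \sum_(j < m) (j.*2.+1 < theight t : nat))%N); last first.
  by move=> t Ht; rewrite -height_as_sum //; case: ifP; rewrite ?mul1n.
rewrite -big_distrr exchange_big /=; congr (_ * _)%N; apply: eq_bigr => j _.
rewrite -(count_predC (fun t => theight t <= j.*2.+1)%N) count_height_leq addKn.
rewrite -sum1_count [RHS]big_mkcond; apply: eq_bigr => t _.
by rewrite /= ltnNge; case: leqP.
Qed.

Lemma root_tree_gf_coef j n : (n < j.*2.+3)%N -> tree_gf j.*2.+1 0 n = v n.
Proof.
move=> Hn; have E : tree_gf j.*2.+1 0 =
    v - v * v ^+ j.*2.+2 + tree_gf j.*2.+1 0 * v ^+ j.*2.+4.
  apply/eqP; rewrite -subr_eq0 -(subrr (v * (1 - v ^+ j.*2.+2))) -{1}root_tree_gf.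
  by apply/eqP; ring.
have v0 : vanishes_below v 1 by move=> [].
rewrite E !fpsD fpsN (vanishes_belowM v0 (vanishes_below_vX (k := j.*2.+2))); last lia.
by rewrite (vanishes_belowMr _ (vanishes_below_vX (k := j.*2.+4))) ?oppr0 ?addr0 //; lia.
Qed.

Lemma height_sum m s : enumerates (RT2 m) s ->
  ((\sum_(t <- s) theight t)%N)%:Z = 2 * \sum_(j < m) (v m - tree_gf j.*2.+1 0 m).
Proof.
move=> Hs; rewrite (height_sum_nat Hs) PoszM (big_morph Posz PoszD (erefl _)).
have <- : (size (retakh_trees m))%:Z = v m by rewrite -(root_tree_gf_coef (j := m)) //; lia.
congr (_ * _); apply: eq_bigr => j _; rewrite /tree_gf subzn // -count_height_leq.
exact: count_size.
Qed.

Definition rhs_term (h : nat) : fps :=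
  (1 - v ^+ 2) * (v ^+ (2 * h - 1) * fps_inv (1 - v ^+ (2 * h))).

Lemma rhs_series_expand m :
  rhs_series m = -2 * v m + \sum_(1 <= h < m.+2) 2 * rhs_term h m.
Proof.
rewrite /rhs_series /fps_add /fps_scale /fps_sum1; congr (_ + _).
by apply: eq_bigr => h _; rewrite !fps_powE.
Qed.

Lemma rhs_term1 : rhs_term 1 = v.
Proof. by rewrite /rhs_term muln1 expr1 mulrCA mulr_fps_inv ?mulr1 ?one_sub_vX_0. Qed.

Lemma rhs_termS j : rhs_term j.+2 = v - tree_gf j.*2.+1 0.
Proof.
have E : (v - tree_gf j.*2.+1 0) * (1 - v ^+ j.*2.+4) = (1 - v ^+ 2) * v ^+ j.*2.+3.
  rewrite mulrBl root_tree_gf.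
  have -> : v ^+ j.*2.+4 = v ^+ 2 * v ^+ j.*2.+2 by rewrite -exprD.
  have -> : v ^+ j.*2.+3 = v * v ^+ j.*2.+2 by rewrite -exprS.
  ring.
rewrite /rhs_term.
have -> : (2 * j.+2 - 1 = j.*2.+3)%N by rewrite -mul2n; lia.
have -> : (2 * j.+2 = j.*2.+4)%N by rewrite -mul2n; lia.
by rewrite mulrA -E -mulrA mulr_fps_inv ?mulr1 ?one_sub_vX_0.
Qed.

Lemma rhs_series_heights m :
  rhs_series m = 2 * \sum_(j < m) (v m - tree_gf j.*2.+1 0 m).
Proof.
rewrite rhs_series_expand big_nat_recl // rhs_term1 addrA.
rewrite (_ : -2 * v m + 2 * v m = 0) ?add0r; last by ring.
rewrite big_add1 /= big_mkord -big_distrr /=; congr (_ * _).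
by apply: eq_bigr => j _; rewrite rhs_termS fpsB.
Qed.

Definition trinom_poly : {poly int} := 1 + 'X + 'X^2.

(* Multiplying by 1 + v + v^2 gives the Pascal-like recurrence. *)
Lemma trinomS n (k : int) :
  trinom n.+1 k = trinom n k + trinom n (k - 1) + trinom n (k - 2).
Proof.
have coefM p i : (p * trinom_poly)`_i.+2 = p`_i.+2 + p`_i.+1 + p`_i.
  by rewrite /trinom_poly !mulrDr mulr1 !coefD coefMX coefMXn /= subn2.
rewrite /trinom exprSr -/trinom_poly; case: k => [[|[|k]]|k].
1-2: by rewrite {2}/trinom_poly !mulrDr mulr1 !coefD coefMX coefMXn /=.
- have -> : Posz k.+2 - 1 = Posz k.+1 by lia.
  have -> : Posz k.+2 - 2 = Posz k by lia.
  exact: coefM.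
- have -> : Negz k - 1 = Negz k.+1 by rewrite !NegzE; lia.
  have -> : Negz k - 2 = Negz k.+2 by rewrite !NegzE; lia.
  by rewrite !addr0.
Qed.

Definition ctrinom (n : nat) (k : int) : int := trinom n (n%:Z + k).

Lemma ctrinom0 k : ctrinom 0 k = (k == 0)%:R.
Proof. by rewrite /ctrinom add0r; case: k => [k|k] //=; rewrite expr0 coef1; case: k. Qed.

Lemma ctrinomS n k :
  ctrinom n.+1 k = ctrinom n (k + 1) + ctrinom n k + ctrinom n (k - 1).
Proof.
rewrite /ctrinom trinomS; congr (trinom n _ + trinom n _ + trinom n _); lia.
Qed.

Lemma ctrinomN n k : ctrinom n (- k) = ctrinom n k.
Proof.
elim: n k => [|n IH] k; first by rewrite !ctrinom0 oppr_eq0.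
rewrite !ctrinomS.
have -> : - k + 1 = - (k - 1) by rewrite opprB addrC.
have -> : - k - 1 = - (k + 1) by rewrite opprD.
by rewrite !IH; ring.
Qed.

Definition ballot (n : nat) (k : int) : int := ctrinom n (k + 1) - ctrinom n (k - 1).

Lemma ballotS n k : ballot n.+1 k = ballot n (k + 1) + ballot n k + ballot n (k - 1).
Proof. by rewrite /ballot !ctrinomS addrK subrK; ring. Qed.

(* v^(j+1) = z v^j (1 + v + v^2), coefficientwise. *)
Lemma coef_vX_rec j n :
  (v ^+ j.+1) n.+1 = (v ^+ j) n + (v ^+ j.+1) n + (v ^+ j.+2) n.
Proof.
have E : v ^+ j.+1 = zvar * (v ^+ j + v ^+ j.+1 + v ^+ j.+2).
  by rewrite exprS {1}v_eq /phi -mulrA; congr (_ * _); rewrite !exprS; ring.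
by rewrite {1}E zvarM_S.
Qed.

(* [z^(n+1)] v^j = [v^(n+1-j)] phi^n - [v^(n-1-j)] phi^n, a form of Lagrange
   inversion for v = z phi(v). *)
Lemma coef_vX n j : (v ^+ j) n.+1 = ballot n (- j%:Z).
Proof.
elim: n j => [|n IH] [|j].
- by rewrite /ballot !ctrinom0.
- case: j => [|j]; first by rewrite /ballot !ctrinom0 expr1.
  by rewrite vanishes_below_vX // /ballot !ctrinom0; case: j.
- by rewrite expr0 /ballot oppr0 add0r sub0r ctrinomN subrr.
rewrite coef_vX_rec !IH ballotS; congr (ballot n _ + _ + ballot n _); lia.
Qed.

(* Lambert-series bookkeeping: summing a(h t) over h >= 1 and t >= 1 counts
   every a(k) once per divisor of k. *)
Section DivisorSums.
Variable a : nat -> int.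

Lemma sum_multiples h T : (0 < h)%N ->
  \sum_(t < T) a (h * t.+1)%N =
  \sum_(1 <= k < (h * T).+1) (if (h %| k)%N then a k else 0).
Proof.
move=> Hh; elim: T => [|T IH]; first by rewrite big_ord0 muln0 big_geq.
rewrite big_ord_recr /= IH [RHS](@big_cat_nat _ _ _ (h * T).+1) /=; try lia.
congr (_ + _); rewrite big_nat_recr /=; last by rewrite mulnS; lia.
rewrite dvdn_mulr // big1_seq ?add0r // => k /andP [_].
rewrite mem_index_iota => /andP [Hk1 Hk2]; case: ifP => // Hd; exfalso.
have Hd' : (h %| k - h * T)%N by rewrite dvdn_subr ?dvdn_mulr //; lia.
by have := dvdn_leq _ Hd'; rewrite mulnS in Hk2; lia.
Qed.

Variable K : nat.
Hypothesis a_supp : forall k, (K < k)%N -> a k = 0.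

Lemma ndiv_count k : (0 < k)%N -> (k <= K)%N ->
  ndiv k = count (fun h => h %| k)%N (index_iota 1 K.+1).
Proof.
move=> Hk HkK; rewrite /ndiv -size_filter; apply: perm_size; apply: uniq_perm.
- exact: divisors_uniq.
- by rewrite filter_uniq // iota_uniq.
move=> x; rewrite mem_filter mem_index_iota -dvdn_divisors //.
case Hx: (x %| k)%N => //=; apply/esym.
have := dvdn_leq Hk Hx; case: x Hx => [|x] Hx /=; last lia.
by rewrite dvd0n in Hx; move: Hx Hk; case: (k).
Qed.

Lemma sum_divisor_count :
  \sum_(1 <= h < K.+1) \sum_(t < K) a (h * t.+1)%N =
  \sum_(1 <= k < K.+1) (ndiv k)%:Z * a k.
Proof.
rewrite big_nat_cond.
rewrite (eq_bigr (fun h => \sum_(1 <= k < K.+1) (if (h %| k)%N then a k else 0))); last first.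
  move=> h /andP [/andP [Hh1 _] _]; rewrite sum_multiples //.
  rewrite [LHS](@big_cat_nat _ _ _ K.+1) /= ?ltnS ?leq_pmull //.
  rewrite [X in _ + X]big1_seq ?addr0 // => k /andP [_].
  by rewrite mem_index_iota => /andP [Hk _]; rewrite a_supp //; case: ifP.
rewrite -big_nat_cond exchange_big_nat /= big_nat_cond [RHS]big_nat_cond.
apply: eq_bigr => k /andP [/andP [Hk1 Hk2] _].
rewrite ndiv_count // -sum1_count (big_morph Posz PoszD (erefl _)) big_distrl /=.
by rewrite [RHS]big_mkcond; apply: eq_bigr => h _; case: ifP; rewrite ?mul1r ?mul0r.
Qed.
End DivisorSums.

Lemma fps_inv_geometric (w : fps) T : (1 - w) 0%N = 1 ->
  fps_inv (1 - w) = \sum_(t < T) w ^+ t + w ^+ T * fps_inv (1 - w).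
Proof.
move=> w0; set g := fps_inv (1 - w); have Hg : (1 - w) * g = 1 by apply: mulr_fps_inv.
have Hs : (1 - w) * \sum_(t < T) w ^+ t = 1 - w ^+ T.
  elim: T => [|T IH]; first by rewrite big_ord0 expr0 mulr0 subrr.
  by rewrite big_ord_recr mulrDr IH exprS; ring.
transitivity (g * ((1 - w) * \sum_(t < T) w ^+ t + w ^+ T)); first by rewrite Hs subrK mulr1.
by rewrite mulrDr mulrA [g * _]mulrC Hg mul1r mulrC.
Qed.

(* [z^N] (1 - v^2) v^(2k-1): the coefficient contributed by v^(2k) in the
   geometric expansion of the summands of the right-hand side. *)
Definition rhs_coef (N k : nat) : int := ((1 - v ^+ 2) * v ^+ (2 * k - 1)) N.

(* Expanding 1 / (1 - v^(2h)) geometrically; terms beyond z^N vanish. *)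
Lemma rhs_term_expand h N : (0 < h)%N ->
  rhs_term h N = \sum_(t < N.+1) rhs_coef N (h * t.+1).
Proof.
move=> Hh; rewrite /rhs_term (fps_inv_geometric N.+1) ?one_sub_vX_0 ?muln_gt0 //.
rewrite mulrDr mulrDr fpsD [X in _ + X](_ : _ = 0) ?addr0; last first.
  apply: (@vanishes_belowMr _ _ (2 * h * N.+1)); last by nia.
  by apply/vanishes_belowMr/vanishes_belowMl; rewrite -exprM; apply: vanishes_below_vX.
rewrite !big_distrr fps_sum; apply: eq_bigr => t _.
by rewrite /rhs_coef /= -exprM -exprD; congr (((1 - v ^+ 2) * v ^+ _) N); nia.
Qed.

Lemma rhs_coef_small N k : (N < 2 * k - 1)%N -> rhs_coef N k = 0.
Proof. by move=> H; apply: vanishes_belowMr H; apply: vanishes_below_vX. Qed.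

Lemma rhs_coef_trinom n k : (0 < k)%N ->
  rhs_coef n.+1 k = trinom n (n%:Z + 2 - 2 * k%:Z) - 2 * trinom n (n%:Z - 2 * k%:Z)
                    + trinom n (n%:Z - 2 - 2 * k%:Z).
Proof.
move=> Hk; rewrite /rhs_coef mulrBl mul1r -exprD fpsB !coef_vX /ballot /ctrinom.
transitivity (trinom n (n%:Z + 2 - 2 * k%:Z) - trinom n (n%:Z - 2 * k%:Z)
              - (trinom n (n%:Z - 2 * k%:Z) - trinom n (n%:Z - 2 - 2 * k%:Z))); last ring.
by congr (trinom n _ - trinom n _ - (trinom n _ - trinom n _)); lia.
Qed.

Lemma rhs_series_trinom n :
  rhs_series n.+1 =
    - 2 * (motzkin n)%:Z
    + 2 * \sum_(1 <= h < n.+3)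
            (ndiv h)%:Z * (trinom n (n%:Z + 2 - 2 * h%:Z)
                           - 2 * trinom n (n%:Z - 2 * h%:Z)
                           + trinom n (n%:Z - 2 - 2 * h%:Z)).
Proof.
rewrite rhs_series_expand -big_distrr /=; congr (_ + _ * _).
transitivity (\sum_(1 <= h < n.+3) \sum_(t < n.+2) rhs_coef n.+1 (h * t.+1)).
  by apply: eq_big_nat => h /andP [Hh _]; apply: rhs_term_expand.
rewrite (sum_divisor_count (K := n.+2)) => [|k Hk]; last by apply: rhs_coef_small; lia.
by apply: eq_big_nat => k /andP [Hk _]; rewrite rhs_coef_trinom.
Qed.

Theorem mainTheorem4 :
  (forall m : nat, exists s : seq ptree, enumerates (RT2 m) s) /\
  (forall (m : nat) (s : seq ptree), enumerates (RT2 m) s ->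
     ((\sum_(t <- s) theight t)%N)%:Z = rhs_series m) /\
  (forall (n : nat) (s : seq ptree), enumerates (RT2 n.+1) s ->
     ((\sum_(t <- s) theight t)%N)%:Z =
       - 2 * (motzkin n)%:Z
       + 2 * \sum_(1 <= h < n.+3)
               (ndiv h)%:Z * (trinom n (n%:Z + 2 - 2 * h%:Z)
                              - 2 * trinom n (n%:Z - 2 * h%:Z)
                              + trinom n (n%:Z - 2 - 2 * h%:Z))).
Proof.
have heights m s : enumerates (RT2 m) s ->
    ((\sum_(t <- s) theight t)%N)%:Z = rhs_series m.
  by move=> Hs; rewrite (height_sum Hs) rhs_series_heights.
split; first by move=> m; eexists; apply: RT2_enum.
split; first exact: heights.
by move=> n s Hs; rewrite (heights _ _ Hs) rhs_series_trinom.
Qed.
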